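(* For every topological space $X$, the simplicial set $S_*^M(X)$ is a Kan complex.
   Context: A continuous multivalued map $X\to Y$ is a subset $T\subset X\times Y$ such that the restriction of the projection $X\times Y\to X$ to $T$ is proper (universally closed), surjective and has finite fibers; $M(X,Y)$ is the set of these. For a continuous map $f:A\to B$ and $\alpha\in M(B,X)$, set $\alpha\circ\mathrm{gr}(f)=\{(a,x)\in A\times X:(f(a),x)\in\alpha\}\in M(A,X)$. Let $\Delta_n=\{(t_0,\dots,t_n)\in\mathbb{R}^{n+1}:t_i\ge 0,\sum t_i=1\}$ with the standard coface maps $\delta^n_i:\Delta_{n-1}\to\Delta_n$ (inserting $0$ in position $i$) and codegeneracy maps $\sigma^n_i:\Delta_{n+1}\to\Delta_n$ (adding coordinates $i$ and $i+1$). $S_*^M(X)$ is the simplicial set with $S_n^M(X)=M(\Delta_n,X)$, face maps $\alpha\mapsto\alpha\circ\mathrm{gr}(\delta^n_i)$ and degeneracy maps $\alpha\mapsto\alpha\circ\mathrm{gr}(\sigma^n_i)$. *)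

From HB Require Import structures.
From mathcomp Require Import all_boot all_order all_algebra.
From mathcomp Require Import all_classical all_reals.
From mathcomp Require Import topology.
From mathcomp Require Import Rstruct Rstruct_topology.
From Stdlib Require Import Rdefinitions.

Set Implicit Arguments.
Unset Strict Implicit.
Unset Printing Implicit Defensive.

Import Order.TTheory GRing.Theory Num.Theory.
Local Open Scope classical_set_scope.
Local Open Scope ring_scope.

Definition simplex_set (n : nat) : set 'rV[R]_(n.+1) :=
  [set t | (forall i, 0 <= t ord0 i) /\ \sum_i t ord0 i = 1].

Arguments simplex_set n : clear implicits.

(** Δ_n as a topological space (subspace topology, via the initial topology
    of the inclusion into R^{n+1} with its product topology). *)
Definition Delta (n : nat) : topologicalType := set_type (simplex_set n).

(** Insert a 0 in position i : the raw vector map underlying δ^{n+1}_i. *)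
Definition coface_vec (m : nat) (i : 'I_(m.+2)) (v : 'rV[R]_(m.+1))
  : 'rV[R]_(m.+2) :=
  \row_j match unlift i j with None => 0 | Some j' => v ord0 j' end.

Lemma coface_vec_simplex m (i : 'I_(m.+2)) (v : 'rV[R]_(m.+1)) :
  simplex_set m v -> simplex_set m.+1 (coface_vec i v).
Proof.
case=> v0 v1; split.
  by move=> j; rewrite mxE; case: unliftP => [j' _|_] //.
rewrite (bigD1 i) //= mxE unlift_none add0r -v1.
rewrite (reindex_onto (lift i) (odflt ord0 \o unlift i)) /=.
  apply: eq_big => [j|j _]; first by rewrite liftK eqxx eq_sym neq_lift.
  by rewrite mxE liftK.
by move=> j ji; case: unliftP ji => [j' ->|->] //; rewrite eqxx.
Qed.

Definition coface (m : nat) (i : 'I_(m.+2)) (t : Delta m) : Delta m.+1 :=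
  exist _ (coface_vec i (val t))
    (mem_set (coface_vec_simplex i (set_mem (valP t)))).

(** Universal closedness of the projection T → A (T ⊂ A × X carrying the
    subspace topology of A × X): for every space Z, the map
    T × Z → A × Z, ((a,x),z) ↦ (a,z) is closed.  A closed subset of T × Z
    is the trace (T × Z) ∩ D of a closed D ⊂ (A × X) × Z. *)
Definition universally_closed_proj {A X : topologicalType}
    (T : set (A * X)) : Prop :=
  forall (Z : topologicalType) (D : set ((A * X) * Z)), closed D ->
    closed [set p : A * Z | exists x : X, T (p.1, x) /\ D ((p.1, x), p.2)].

Definition is_mvmap {A X : topologicalType} (T : set (A * X)) : Prop :=
  [/\ universally_closed_proj T,
      (forall a : A, exists x : X, T (a, x)) &
      (forall a : A, finite_set [set x : X | T (a, x)])].

Definition comp_gr {A B X : Type} (alpha : set (B * X)) (f : A -> B)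
  : set (A * X) := [set p | alpha (f p.1, p.2)].

Definition SM (X : topologicalType) (n : nat) : set (set (Delta n * X)) :=
  [set T | is_mvmap T].

Arguments SM X n : clear implicits.

Definition SM_face (X : topologicalType) (m : nat) (i : 'I_(m.+2))
    (alpha : set (Delta m.+1 * X)) : set (Delta m * X) :=
  comp_gr alpha (@coface m i).

Arguments SM_face X m i alpha : clear implicits.

(** C n is an ambient type containing the n-simplices S n, and
    d m i : C (m+1) → C m is the i-th face map.  The Kan condition: every
    horn Λ^{n}_k → S (n ≥ 1, 0 ≤ k ≤ n), i.e. every family (y_i)_{i ≠ k}
    of (n-1)-simplices with d_i y_j = d_{j-1} y_i for i < j, i,j ≠ k,
    has a filler x ∈ S_n with d_i x = y_i for all i ≠ k.
    The case n = 1 (no compatibility) and the cases n = m+2 are stated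
    separately to avoid dependent-type index arithmetic. *)

Definition Kan_condition (C : nat -> Type) (S : forall n, set (C n))
    (d : forall m, 'I_(m.+2) -> C m.+1 -> C m) : Prop :=
  (forall (k : 'I_2) (y : 'I_2 -> C 0),
     (forall i, i != k -> S 0 (y i)) ->
     exists x, S 1 x /\ forall i, i != k -> d 0 i x = y i) /\
  (forall (m : nat) (k : 'I_(m.+3)) (y : 'I_(m.+3) -> C m.+1),
     (forall i, i != k -> S m.+1 (y i)) ->
     (forall i j : 'I_(m.+3), ltn i j -> i != k -> j != k ->
        d m (inord (nat_of_ord i)) (y j) = d m (inord (nat_of_ord j).-1) (y i)) ->
     exists x, S m.+2 x /\ forall i, i != k -> d m.+1 i x = y i).

Definition SM_is_Kan (X : topologicalType) : Prop :=
  Kan_condition (SM X) (@SM_face X).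

(** A horn Λ^n_k ⊂ Δ_n is a retract of Δ_n: subtracting from every coordinate
    the least coordinate outside position [k], and moving the removed mass to
    position [k], sends Δ_n continuously onto the union of the faces [t_i = 0],
    [i ≠ k], and fixes these faces.  Multivalued maps can be pulled back along
    continuous maps, restricted to closed subsets and glued along finite
    unions; so a compatible family [y_i] on the faces glues to a multivalued
    map on the horn, which composed with the retraction is a filler.  On the
    face [t_i = 0], [y_i] is read through the left inverse of the coface
    [δ_i] that adds coordinate [i] to a neighbouring one; the compatibility
    of the [y_i] makes the pieces agree on the overlaps. *)

From mathcomp Require Import all_boot all_order all_algebra.
From mathcomp Require Import all_classical all_reals topology normedtype.
From mathcomp Require Import Rstruct Rstruct_topology.
From Stdlib Require Import Rdefinitions.
From mathcomp Require Import lra.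

Set Implicit Arguments.
Unset Strict Implicit.
Unset Printing Implicit Defensive.

Import Order.TTheory GRing.Theory Num.Theory.
Local Open Scope classical_set_scope.
Local Open Scope ring_scope.

Section ProductContinuity.
Context {T U V : topologicalType}.

Lemma continuous_fst : continuous (@fst U V).
Proof. by move=> x; exact: cvg_fst. Qed.

Lemma continuous_snd : continuous (@snd U V).
Proof. by move=> x; exact: cvg_snd. Qed.

Lemma continuous_pair (f : T -> U) (g : T -> V) :
  continuous f -> continuous g -> continuous (fun x => (f x, g x)).
Proof. by move=> cf cg x; apply: cvg_pair; [exact: cf | exact: cg]. Qed.

End ProductContinuity.

Section RealContinuity.
Context {Y : topologicalType}.
Implicit Types f g : Y -> R.

Lemma continuous_addR f g :
  continuous f -> continuous g -> continuous (fun y => f y + g y).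
Proof. by move=> cf cg y; exact: (@continuousD _ R^o Y f g y (cf y) (cg y)). Qed.

Lemma continuous_minR f g :
  continuous f -> continuous g -> continuous (fun y => Order.min (f y) (g y)).
Proof. by move=> cf cg y; exact: (@continuous_min R Y f g y (cf y) (cg y)). Qed.

Lemma continuous_mulR (c : R) f : continuous f -> continuous (fun y => c * f y).
Proof.
by move=> cf y; exact: (@continuousM R Y (fun=> c) f y (cvg_cst c) (cf y)).
Qed.

End RealContinuity.

Section UniversallyClosed.
Context {A X : topologicalType}.

Lemma universally_closed_proj_comp_gr {B : topologicalType}
    (alpha : set (B * X)) (f : A -> B) :
  continuous f -> universally_closed_proj alpha ->
  universally_closed_proj (comp_gr alpha f).
Proof.
move=> cf ucl Z D cD.
(* use universal closedness of [alpha] with parameter space [A * Z] *)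
pose shuffle (q : (B * X) * (A * Z)) := ((q.2.1, q.1.2), q.2.2).
have cshuffle : continuous shuffle.
  apply: continuous_pair; last by move=> q; apply: continuous_comp;
    [exact: continuous_snd | exact: continuous_snd].
  by apply: continuous_pair => q; apply: continuous_comp;
    [exact: continuous_snd | exact: continuous_fst |
     exact: continuous_fst | exact: continuous_snd].
have cgraph : continuous (fun p : A * Z => (f p.1, p)).
  apply: continuous_pair => p; last exact: cvg_id.
  by apply: continuous_comp; [exact: continuous_fst | exact: cf].
have := ucl _ _ ((continuous_closedP _).1 cshuffle _ cD).
exact: (continuous_closedP _).1 cgraph _.
Qed.

Lemma universally_closed_proj_restrict (T : set (A * X)) (C : set A) :
  closed C -> universally_closed_proj T ->
  universally_closed_proj [set p | C p.1 /\ T p].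
Proof.
move=> cC ucT Z D cD.
have -> : [set p : A * Z | exists x, [set p | C p.1 /\ T p] (p.1, x) /\
                                      D ((p.1, x), p.2)]
  = fst @^-1` C `&` [set p | exists x, T (p.1, x) /\ D ((p.1, x), p.2)].
  apply/seteqP; split=> -[a z] /=.
    by case=> x [[Ca Tx] Dx]; split=> //; exists x.
  by case=> Ca [x [Tx Dx]]; exists x.
apply: closedI; last exact: ucT.
exact: (continuous_closedP _).1 continuous_fst _ cC.
Qed.

Lemma universally_closed_proj_bigcup (I : finType) (T : I -> set (A * X)) :
  (forall i, universally_closed_proj (T i)) ->
  universally_closed_proj [set p | exists i, T i p].
Proof.
move=> ucT Z D cD.
have -> : [set p : A * Z | exists x, [set p | exists i, T i p] (p.1, x) /\
                                      D ((p.1, x), p.2)]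
  = \bigcup_(i in [set: I])
      [set p | exists x, T i (p.1, x) /\ D ((p.1, x), p.2)].
  apply/seteqP; split=> -[a z] /=.
    by case=> x [[i Tx] Dx]; exists i => //; exists x.
  by case=> i _ [x [Tx Dx]]; exists x; split=> //; exists i.
by apply: closed_bigcup => [|i _]; [exact: finite_finset | exact: ucT].
Qed.

Lemma is_mvmap_comp_gr {B : topologicalType} (alpha : set (B * X)) (f : A -> B) :
  continuous f -> is_mvmap alpha -> is_mvmap (comp_gr alpha f).
Proof.
move=> cf [ucl surj fin]; split=> [|a|a]; [|exact: surj (f a)|exact: fin (f a)].
exact: universally_closed_proj_comp_gr.
Qed.

End UniversallyClosed.

Lemma continuous_mx_entries (Y T : topologicalType) m n (h : Y -> 'M[T]_(m, n)) :
  (forall i j, continuous (fun y => h y i j)) -> continuous h.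
Proof.
move=> ch y A [P /= PN sPA].
have : \forall z \near y, forall i j, P i j (h z i j).
  by apply: filter_forall => i; apply: filter_forall => j; exact: ch.
by apply: filterS => z Pz; exact: sPA.
Qed.

Lemma continuous_Delta_coord n j : continuous (fun t : Delta n => val t ord0 j).
Proof.
move=> t; apply: (@continuous_comp _ _ _ (fun t : Delta n => val t)
  (fun M : 'rV[R]_n.+1 => M ord0 j)); [exact: initial_continuous |
  exact: coord_continuous].
Qed.

Lemma continuous_to_Delta (Y : topologicalType) n (g : Y -> Delta n) :
  (forall j, continuous (fun y => val (g y) ord0 j)) -> continuous g.
Proof.
move=> cg; apply: continuous_comp_initial.
by apply: continuous_mx_entries => i j; rewrite (ord1 i); exact: cg.
Qed.

Lemma Delta_ge0 n (t : Delta n) i : 0 <= val t ord0 i.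
Proof. by case: (set_mem (valP t)) => t_ge0 _; exact: t_ge0. Qed.

Lemma Delta0_eq (s t : Delta 0) : s = t.
Proof.
have val1 (u : Delta 0) : val u ord0 ord0 = 1.
  by case: (set_mem (valP u)) => _; rewrite big_ord1.
by apply: val_inj; apply/rowP => j; rewrite (ord1 j) !val1.
Qed.

(** * Left inverses of the cofaces *)

Definition collapse_vec n (i : 'I_n.+2) (t : 'rV[R]_n.+2) : 'rV[R]_n.+1 :=
  \row_j (t ord0 (lift i j) + (if j == ord0 then t ord0 i else 0)).

Lemma collapse_vec_simplex n (i : 'I_n.+2) t :
  simplex_set n.+1 t -> simplex_set n (collapse_vec i t).
Proof.
case=> t_ge0 t_sum1; split=> [j|].
  by rewrite mxE addr_ge0 //; case: ifP.
rewrite -t_sum1 (bigD1_ord i) //= addrC.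
under eq_bigr do rewrite mxE.
by rewrite big_split /= -big_mkcond /= (big_pred1_eq _ ord0).
Qed.

Definition collapse n (i : 'I_n.+2) (t : Delta n.+1) : Delta n :=
  exist _ (collapse_vec i (val t))
    (mem_set (collapse_vec_simplex i (set_mem (valP t)))).

Arguments collapse : simpl never.

Lemma collapseE n (i : 'I_n.+2) (t : Delta n.+1) j : val (collapse i t) ord0 j =
  val t ord0 (lift i j) + (if j == ord0 then val t ord0 i else 0).
Proof. by rewrite /collapse /= mxE. Qed.

Lemma continuous_collapse n (i : 'I_n.+2) : continuous (@collapse n i).
Proof.
apply: continuous_to_Delta => j.
under eq_fun do rewrite collapseE.
apply: continuous_addR; first exact: continuous_Delta_coord.
by case: (j == ord0) => //; [exact: continuous_Delta_coord | exact: cst_continuous].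
Qed.

Lemma collapse_coface n (i : 'I_n.+2) : cancel (@coface n i) (collapse i).
Proof.
move=> s; apply: val_inj; apply/rowP => j.
by rewrite collapseE /= !mxE liftK unlift_none if_same addr0.
Qed.

Lemma coface_collapse n (i : 'I_n.+2) (t : Delta n.+1) :
  val t ord0 i = 0 -> coface i (collapse i t) = t.
Proof.
move=> ti0; apply: val_inj; apply/rowP => j /=.
rewrite mxE; case: unliftP => [j' ->|->] //.
by rewrite collapseE ti0 if_same addr0.
Qed.

Lemma coface_at n (i : 'I_n.+2) (s : Delta n) : val (coface i s) ord0 i = 0.
Proof. by rewrite /= mxE unlift_none. Qed.

Lemma lift_inord_lt n (i j : 'I_n.+2) :
  (i < j)%nat -> lift j (inord i : 'I_n.+1) = i.
Proof.
move=> ltij; apply: val_inj => /=.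
have ltin : (i < n.+1)%nat := leq_trans ltij (ltn_ord j).
by rewrite inordK // /bump leqNgt ltij.
Qed.

Lemma lift_inord_pred n (i j : 'I_n.+2) :
  (i < j)%nat -> lift i (inord j.-1 : 'I_n.+1) = j.
Proof.
move=> ltij; apply: val_inj => /=.
have j_gt0 : (0 < j)%nat := leq_ltn_trans (leq0n i) ltij.
rewrite inordK; last by rewrite -ltnS (ltn_predK j_gt0) ltn_ord.
by rewrite /bump -ltnS (ltn_predK j_gt0) ltij add1n (ltn_predK j_gt0).
Qed.

Lemma collapse_lift_coord n (i j : 'I_n.+2) (l : 'I_n.+1) (t : Delta n.+1) :
  lift j l = i -> val t ord0 j = 0 -> val (collapse j t) ord0 l = val t ord0 i.
Proof. by move=> <- tj0; rewrite collapseE tj0 if_same addr0. Qed.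

(* The simplicial identity [s_i s_j = s_(j-1) s_i], on the face [t_i = t_j = 0]. *)
Lemma collapseC n (t : Delta n.+2) (i j : 'I_n.+3) : (i < j)%nat ->
  val t ord0 i = 0 -> val t ord0 j = 0 ->
  collapse (inord i) (collapse j t) = collapse (inord j.-1) (collapse i t).
Proof.
move=> ltij ti0 tj0; apply: val_inj; apply/rowP => l.
rewrite !collapseE (lift_inord_lt ltij) (lift_inord_pred ltij) ti0 tj0.
rewrite !(if_same, addr0); congr (val t ord0 _); apply: val_inj => /=.
have j_gt0 : (0 < j)%nat := leq_ltn_trans (leq0n i) ltij.
have ltin : (i < n.+2)%nat := leq_trans ltij (ltn_ord j).
have ltjn : (j.-1 < n.+2)%nat by rewrite -ltnS (ltn_predK j_gt0) ltn_ord.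
rewrite !inordK //.
rewrite bumpC; congr (bump _ (bump _ _)).
- by rewrite /bump leqNgt ltij.
- by rewrite /unbump ltij subn1.
Qed.

(** * The retraction of Δ_{n+1} onto the horn Λ_k *)

(* Seeding the minimum with a coordinate other than [k] makes it attained. *)
Definition horn_gap n (k : 'I_n.+2) (t : 'rV[R]_n.+2) : R :=
  \big[Order.min/t ord0 (lift k ord0)]_(i | i != k) t ord0 i.

Lemma horn_gap_le n (k : 'I_n.+2) t i : i != k -> horn_gap k t <= t ord0 i.
Proof. by move=> ik; rewrite /horn_gap bigmin_le_cond. Qed.

Lemma horn_gap_attained n (k : 'I_n.+2) t :
  exists2 i, i != k & horn_gap k t = t ord0 i.
Proof.
apply: (big_ind (fun v => exists2 i, i != k & v = t ord0 i)).
- by exists (lift k ord0); rewrite // eq_sym neq_lift.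
- by move=> _ _ [i ik ->] [j jk ->]; case: leP => _; [exists i | exists j].
- by move=> i ik; exists i.
Qed.

Lemma continuous_horn_gap n (k : 'I_n.+2) :
  continuous (fun t : Delta n.+1 => horn_gap k (val t)).
Proof.
rewrite /horn_gap unlock; elim: (index_enum _) => [|a s IH] /=.
  exact: continuous_Delta_coord.
case: (a != k) => //.
by apply: continuous_minR => //; exact: continuous_Delta_coord.
Qed.

Definition horn_retract_vec n (k : 'I_n.+2) (t : 'rV[R]_n.+2) : 'rV[R]_n.+2 :=
  \row_j (t ord0 j - horn_gap k t + (if j == k then n.+2%:R * horn_gap k t else 0)).

Lemma horn_retract_vec_simplex n (k : 'I_n.+2) t :
  simplex_set n.+1 t -> simplex_set n.+1 (horn_retract_vec k t).
Proof.
case=> t_ge0 t_sum1.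
have gap_ge0 : 0 <= horn_gap k t by have [i _ ->] := horn_gap_attained k t.
split=> [j|].
  rewrite mxE; case: eqP => [->|/eqP jk]; last by rewrite addr0 subr_ge0 horn_gap_le.
  have := t_ge0 k; have : 1 <= n.+2%:R :> R by rewrite ler1n.
  by nra.
under eq_bigr do rewrite mxE.
rewrite big_split /= -big_mkcond /= (big_pred1_eq _ k) big_split /=.
by rewrite t_sum1 sumrN sumr_const card_ord mulr_natl subrK.
Qed.

Definition horn_retract n (k : 'I_n.+2) (t : Delta n.+1) : Delta n.+1 :=
  exist _ (horn_retract_vec k (val t))
    (mem_set (horn_retract_vec_simplex k (set_mem (valP t)))).

Arguments horn_retract : simpl never.

Lemma horn_retractE n (k : 'I_n.+2) (t : Delta n.+1) j :
  val (horn_retract k t) ord0 j = val t ord0 j - horn_gap k (val t) +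
    (if j == k then n.+2%:R * horn_gap k (val t) else 0).
Proof. by rewrite /horn_retract /= mxE. Qed.

Lemma continuous_horn_retract n (k : 'I_n.+2) : continuous (@horn_retract n k).
Proof.
apply: continuous_to_Delta => j.
under eq_fun do rewrite horn_retractE.
have cgap := @continuous_horn_gap n k.
apply: continuous_addR.
  apply: continuous_addR; first exact: continuous_Delta_coord.
  by move=> t; exact: (@continuousN _ R^o _ _ t (cgap t)).
by case: (j == k); [exact: continuous_mulR | exact: cst_continuous].
Qed.

Lemma horn_retract_face n (k : 'I_n.+2) (t : Delta n.+1) :
  exists2 i, i != k & val (horn_retract k t) ord0 i = 0.
Proof.
have [i ik gap_i] := horn_gap_attained k (val t).
by exists i => //; rewrite horn_retractE (negbTE ik) addr0 gap_i subrr.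
Qed.

Lemma horn_retract_id n (k j : 'I_n.+2) (t : Delta n.+1) :
  j != k -> val t ord0 j = 0 -> horn_retract k t = t.
Proof.
move=> jk tj0.
have gap0 : horn_gap k (val t) = 0.
  apply/eqP; rewrite eq_le -{1}tj0 horn_gap_le //.
  by have [i _ ->] := horn_gap_attained k (val t); exact: Delta_ge0.
apply: val_inj; apply/rowP => l.
by rewrite horn_retractE gap0 subr0 mulr0 if_same addr0.
Qed.

Section HornFiller.
Variables (X : topologicalType) (m : nat) (k : 'I_m.+3).
Variable y : 'I_m.+3 -> set (Delta m.+1 * X).
Hypothesis y_mvmap : forall i, i != k -> is_mvmap (y i).
Hypothesis y_compat : forall i j : 'I_m.+3, (i < j)%nat -> i != k -> j != k ->
  SM_face X m (inord i) (y j) = SM_face X m (inord j.-1) (y i).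

Lemma horn_agree_lt (t : Delta m.+2) (i j : 'I_m.+3) z : (i < j)%nat ->
  i != k -> j != k -> val t ord0 i = 0 -> val t ord0 j = 0 ->
  y i (collapse i t, z) = y j (collapse j t, z).
Proof.
move=> ltij ik jk ti0 tj0.
set s := collapse (inord i) (collapse j t).
have -> : collapse j t = coface (inord i) s.
  by rewrite coface_collapse // (collapse_lift_coord (lift_inord_lt ltij) tj0).
have -> : collapse i t = coface (inord j.-1) s.
  rewrite /s collapseC // coface_collapse //.
  by rewrite (collapse_lift_coord (lift_inord_pred ltij) ti0).
exact: esym (congr1 (fun S => S (s, z)) (y_compat ltij ik jk)).
Qed.

Lemma horn_agree (t : Delta m.+2) (i j : 'I_m.+3) z :
  i != k -> j != k -> val t ord0 i = 0 -> val t ord0 j = 0 ->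
  y i (collapse i t, z) -> y j (collapse j t, z).
Proof.
move=> ik jk ti0 tj0; case: (ltngtP i j) => [ltij|ltji|/val_inj -> //].
- by rewrite (horn_agree_lt _ ltij).
- by rewrite (horn_agree_lt _ ltji).
Qed.

Definition horn_piece (i : {i : 'I_m.+3 | i != k}) : set (Delta m.+2 * X) :=
  [set p | val (horn_retract k p.1) ord0 (val i) = 0 /\
           y (val i) (collapse (val i) (horn_retract k p.1), p.2)].

Definition horn_filler : set (Delta m.+2 * X) := [set p | exists i, horn_piece i p].

Lemma horn_filler_mvmap : is_mvmap horn_filler.
Proof.
split=> [|t|t].
- apply: universally_closed_proj_bigcup => -[i ik].
  have [ucl _ _] := y_mvmap ik.
  apply: (@universally_closed_proj_restrict _ _
    (comp_gr (y i) (collapse i \o horn_retract k))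
    [set t | val (horn_retract k t) ord0 i = 0]).
    have cri : continuous (fun t : Delta m.+2 => val (horn_retract k t) ord0 i).
      move=> t; apply: (@continuous_comp _ _ _ (horn_retract k)
        (fun u : Delta m.+2 => val u ord0 i));
        [exact: continuous_horn_retract | exact: continuous_Delta_coord].
    by apply: ((continuous_closedP _).1 cri [set r : R | r = 0]); exact: closed_eq.
  apply: universally_closed_proj_comp_gr ucl => t.
  by apply: (@continuous_comp _ _ _ (horn_retract k) (collapse i));
    [exact: continuous_horn_retract | exact: continuous_collapse].
- have [i ik ri0] := horn_retract_face k t.
  have [_ surj _] := y_mvmap ik.
  have [z yz] := surj (collapse i (horn_retract k t)).
  by exists z, (exist _ i ik).
- apply: (@sub_finite_set _ _ (\bigcup_(i in [set: {i | i != k}])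
    [set z | y (val i) (collapse (val i) (horn_retract k t), z)])).
    by move=> z [i [_ yz]]; exists i.
  apply: bigcup_finite => [|[i ik] _]; first exact: finite_finset.
  by have [_ _ fin] := y_mvmap ik; exact: fin.
Qed.

Lemma horn_filler_face j : j != k -> SM_face X m.+1 j horn_filler = y j.
Proof.
move=> jk; apply/funext => -[s z].
rewrite /SM_face /comp_gr /horn_filler /horn_piece /mkset; cbn [fst snd].
have tj0 := coface_at j s.
rewrite (horn_retract_id jk tj0).
apply/propext; split=> [[[i ik] [ti0 yi]]|yj]; last first.
  by exists (exist _ j jk); split=> //=; rewrite collapse_coface.
by rewrite -(collapse_coface j s); exact: horn_agree yi.
Qed.

End HornFiller.

Lemma horn1_filler (X : topologicalType) (k : 'I_2) (y : 'I_2 -> set (Delta 0 * X)) :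
  (forall i, i != k -> SM X 0 (y i)) ->
  exists x, SM X 1 x /\ forall i, i != k -> SM_face X 0 i x = y i.
Proof.
move=> Sy; set j := lift k ord0.
have jk : j != k by rewrite eq_sym neq_lift.
exists (comp_gr (y j) (collapse ord0)); split.
  exact: is_mvmap_comp_gr (@continuous_collapse 0 ord0) (Sy j jk).
move=> i ik; have -> : i = j.
  by case: (unliftP k i) ik => [i' -> _|->]; [rewrite (ord1 i') | rewrite eqxx].
apply/funext => -[s z]; rewrite /SM_face /comp_gr /=.
by rewrite (Delta0_eq (collapse ord0 (coface j s)) s).
Qed.

Theorem mainTheorem8 : forall X : topologicalType, SM_is_Kan X.
Proof.
move=> X; split; first exact: horn1_filler.
move=> m k y y_mvmap y_compat; exists (horn_filler k y); split.
- exact: horn_filler_mvmap.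
- exact: horn_filler_face.
Qed.
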